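(* Let $G=(V,E)$ be a control flow graph, let $p$ be a predicate node with successors $s_1,s_2$ in $G$ and with at least two successors in $A_p$. Assume $V_1\cap V_2=\emptyset$ and let $U=V_p\setminus(V_1\cup V_2)$. Then there exist nodes $a,b$ that are DOD on $p$ if and only if the cycle $C$ of $A_p$ has an unfolding belonging to the language $V_1.U^*.(V_2.U^* )^*.V_2.U^*.(V_1.U^* )^*$.
   Context: A control flow graph (CFG) is a finite directed graph $G=(V,E)$ in which every node has at most two outgoing edges; nodes with exactly two outgoing edges are predicate nodes. A path from $n_1$ is a nonempty finite or infinite sequence of nodes with each adjacent pair an edge; it is maximal if it is infinite or its last node has no successor. $V_p$ is the set of nodes occurring on all maximal paths from $p$ in $G$. For $V'\subseteq V$, a $V'$-interval from $x$ to $y$ is a finite path $n_1\ldots n_k$ in $G$ with $k\ge 2$, $n_1=x\in V'$, $n_k=y\in V'$, and $n_i\notin V'$ for $1<i<k$. $A_p$ is the directed graph with node set $V_p$ and an edge $(x,y)$ iff there is a $V_p$-interval from $x$ to $y$ in $G$. The cycle $C$ of $A_p$ is the subgraph of $A_p$ induced by $V_p\setminus\{p\}$; an unfolding of $C$ is a path in $C$ containing each node of $C$ exactly once, viewed as a word over the alphabet $V_p$. For $i\in\{1,2\}$, $V_i$ is the set of nodes $n\in V_p$ such that there is a finite path in $G$ from $s_i$ to $n$ whose nodes other than the last one all lie outside $V_p$ (possibly $n=s_i$). For three distinct nodes $p,a,b$ with $p$ a predicate node with successors $s_1,s_2$, the nodes $a,b$ are DOD on $p$ if all maximal paths from $p$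 contain both $a$ and $b$, all maximal paths from $s_1$ contain $a$ before any occurrence of $b$, and all maximal paths from $s_2$ contain $b$ before any occurrence of $a$. Concatenation and Kleene star of sets of nodes are the usual regular-language operations. *)

From mathcomp Require Import all_boot.
Set Implicit Arguments. Unset Strict Implicit. Unset Printing Implicit Defensive.

Section CFG.
Variables (V : finType) (E : rel V).

Definition is_cfg : Prop := forall x : V, #|[pred y | E x y]| <= 2.

Definition pred_node (p s1 s2 : V) : Prop :=
  s1 != s2 /\ forall y, E p y = (y == s1) || (y == s2).

Definition fin_maxpath (x : V) (s : seq V) : Prop :=
  path E x s /\ forall y, ~~ E (last x s) y.

Definition inf_path (x : V) (f : nat -> V) : Prop :=
  f 0 = x /\ forall i, E (f i) (f i.+1).

Definition on_all_maxpaths (x n : V) : Prop :=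
  (forall s, fin_maxpath x s -> n \in x :: s) /\
  (forall f, inf_path x f -> exists i, f i = n).

Definition Vp (p : V) (n : V) : Prop := on_all_maxpaths p n.

Definition interval (S : V -> Prop) (x y : V) : Prop :=
  S x /\ S y /\ exists m : seq V, path E x (rcons m y) /\ forall z, z \in m -> ~ S z.

Definition Aedge (p x y : V) : Prop := Vp p x /\ Vp p y /\ interval (Vp p) x y.

Fixpoint chainP (R : V -> V -> Prop) (x : V) (s : seq V) : Prop :=
  match s with
  | [::] => True
  | y :: s' => R x y /\ chainP R y s'
  end.

Definition Cnode (p n : V) : Prop := Vp p n /\ n <> p.

Definition unfolding (p : V) (w : seq V) : Prop :=
  (exists x r, w = x :: r /\ chainP (Aedge p) x r) /\
  uniq w /\
  (forall z, z \in w -> Cnode p z) /\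
  (forall z, Cnode p z -> z \in w).

Definition Vi (p s n : V) : Prop :=
  Vp p n /\ exists m : seq V, path E s m /\ last s m = n /\
     forall z, z \in belast s m -> ~ Vp p z.

Definition Uset (p s1 s2 n : V) : Prop := Vp p n /\ ~ Vi p s1 n /\ ~ Vi p s2 n.

Definition fin_before (x : V) (s : seq V) (a b : V) : Prop :=
  exists i, i < size (x :: s) /\ nth x (x :: s) i = a /\
    forall j, j <= i -> nth x (x :: s) j <> b.

Definition inf_before (f : nat -> V) (a b : V) : Prop :=
  exists i, f i = a /\ forall j, j <= i -> f j <> b.

Definition all_before (x a b : V) : Prop :=
  (forall s, fin_maxpath x s -> fin_before x s a b) /\
  (forall f, inf_path x f -> inf_before f a b).

Definition DOD (p s1 s2 a b : V) : Prop :=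
  p <> a /\ p <> b /\ a <> b /\
  on_all_maxpaths p a /\ on_all_maxpaths p b /\
  all_before s1 a b /\ all_before s2 b a.

End CFG.

Definition lang (T : Type) := seq T -> Prop.

Definition lsym (T : Type) (S : T -> Prop) : lang T :=
  fun w => exists x, w = [:: x] /\ S x.

Definition lcat (T : Type) (L1 L2 : lang T) : lang T :=
  fun w => exists w1 w2, w = w1 ++ w2 /\ L1 w1 /\ L2 w2.

Inductive lstar (T : Type) (L : lang T) : seq T -> Prop :=
  | lstar_nil : lstar L [::]
  | lstar_cons w1 w2 : L w1 -> lstar L w2 -> lstar L (w1 ++ w2).

Definition DODlang (V : finType) (E : rel V) (p s1 s2 : V) : lang V :=
  let V1 := lsym (Vi E p s1) in
  let V2 := lsym (Vi E p s2) in
  let Us := lstar (lsym (Uset E p s1 s2)) in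
  lcat V1 (lcat Us (lcat (lstar (lcat V2 Us))
     (lcat V2 (lcat Us (lstar (lcat V1 Us)))))).

(* Because [p] has two distinct successors in [A_p], no cycle of [G] passes
   through [p], and every node of [C] lies on all maximal paths from every node
   of [C]; consequently [C] carries a Hamiltonian cycle of [A_p].
   If [a], [b] are DOD on [p], cutting that cycle after [a] and after [b] leaves
   every [V_1] node on the arc ending in [a] and every [V_2] node on the arc
   ending in [b]; read from the last [V_1] node of the first arc, the cycle is a
   word of the language.
   Conversely, a word of the language reads [c0 X l2 Y] with [c0] in [V_1], [l2]
   in [V_2], no [V_1] letter in [X] and no [V_2] letter in [Y]; then [c0] and
   [l2] are DOD: a path from [s_1] to [l2] avoiding [c0] would enter [V_p] in
   [Y], and the unfolding leads back from [l2] to that entry without meeting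
   [c0], closing a cycle through [l2] that avoids [c0]; symmetrically for [s_2]. *)

From mathcomp Require Import all_boot.
From Stdlib Require Import Classical ClassicalEpsilon.
Set Implicit Arguments. Unset Strict Implicit. Unset Printing Implicit Defensive.

Definition classicb (P : Prop) : bool := if excluded_middle_informative P then true else false.

Lemma classicbP (P : Prop) : reflect P (classicb P).
Proof. by rewrite /classicb; case: excluded_middle_informative => h; constructor. Qed.

Lemma last_occurrence (T : eqType) (P : T -> Prop) (s : seq T) :
  (exists2 z, z \in s & P z) ->
  exists s1 z s2, [/\ s = s1 ++ z :: s2, P z & forall y, y \in s2 -> ~ P y].
Proof.
elim: s => [|x s IH] [y]; rewrite ?inE // => hy Py.
case: (classic (exists2 z, z \in s & P z)) => [/IH [s1 [z [s2 [-> Pz hs2]]]]|hs].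
  by exists (x :: s1), z, s2.
exists [::], x, s; split=> // [|z zs Pz]; last by apply: hs; exists z.
by case/orP: hy => [/eqP <- //|ys]; case: hs; exists y.
Qed.

Lemma last_take_nth (T : Type) (d x : T) s i :
  i <= size s -> last x (take i s) = nth d (x :: s) i.
Proof. by elim: s x i => [|y s IH] x [|i] //= /IH. Qed.

Lemma path_suffix (T : eqType) (e : rel T) x s s1 z s2 :
  path e x s -> x :: s = s1 ++ z :: s2 -> path e z s2 /\ last z s2 = last x s.
Proof.
move=> hp; case: s1 => [|y s1] [ex es]; subst x s => //.
by move: hp; rewrite cat_path last_cat /= => /andP [_ /andP [_ ->]].
Qed.

Lemma cycle_path_suffix (T : eqType) (e : rel T) s1 z s2 :
  cycle e (s1 ++ z :: s2) -> path e z s2.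
Proof.
by rewrite -(rot_cycle (size s1)) rot_size_cat /= rcons_path cat_path => /andP [/andP []].
Qed.

Lemma uniq_cat_notin (T : eqType) (s t : seq T) x : uniq (s ++ t) -> x \in t -> x \notin s.
Proof. by rewrite cat_uniq => /and3P [_ /hasPn h _] /h. Qed.

Lemma rot_rcons2 (T : eqType) (c : seq T) a b : a \in c -> b \in c -> a != b ->
  exists i L0 R0, rot i c = rcons L0 a ++ rcons R0 b.
Proof.
move=> ac bc ab; case/splitPr: bc ac => c1 c2; rewrite mem_cat inE (negPf ab) /= => ac.
exists (size (rcons c1 b)); rewrite -cat_rcons rot_size_cat -rcons_cat.
have : a \in c2 ++ c1 by rewrite mem_cat orbC.
by case/splitPr=> L0 R0; exists L0, R0; rewrite rcons_cat cat_rcons.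
Qed.

Lemma chainP_cat (T : finType) (R : T -> T -> Prop) x r1 r2 :
  chainP R x (r1 ++ r2) -> chainP R x r1 /\ chainP R (last x r1) r2.
Proof. by elim: r1 x => [|y r1 IH] x //= [xy /IH []]. Qed.

Lemma fcycle_orbit_iter (T : finType) (f : T -> T) x :
  exists i, fcycle f (orbit f (iter i f x)).
Proof.
have /trajectP [i ik ei] := looping_order f x.
exists i; apply: (all_iffLR orbitPcycle 3 0); exists (order f x - i).-1.
rewrite prednK; last by rewrite subn_gt0.
by rewrite -iterD subnK ?ei // ltnW.
Qed.

Section MaxPaths.
Variables (V : finType) (E : rel V).
Implicit Types (B : V -> Prop) (f : nat -> V).

Definition avoiding_maxpath B x : Prop :=
  (exists s, fin_maxpath E x s /\ forall z, z \in x :: s -> ~ B z) \/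
  (exists f, inf_path E x f /\ forall i, ~ B (f i)).

Lemma on_all_maxpathsP x n : on_all_maxpaths E x n <-> ~ avoiding_maxpath (eq n) x.
Proof.
split=> [[hfin hinf] [[s [/hfin ns hs]]|[f [/hinf [i fi] hf]]]|hn].
- exact: hs ns erefl.
- exact: hf i (esym fi).
split=> [s hs|f hf]; apply: NNPP => hnot; apply: hn.
- by left; exists s; split=> // z zs nz; apply: hnot; rewrite nz.
- by right; exists f; split=> // i ni; apply: hnot; exists i.
Qed.

Lemma avoiding_maxpath_sub B B' x :
  (forall z, B' z -> B z) -> avoiding_maxpath B x -> avoiding_maxpath B' x.
Proof.
move=> BB' [[s [hs hB]]|[f [hf hB]]]; [left; exists s|right; exists f].
- by split=> // z /hB + /BB'.
- by split=> // i /BB'; apply: hB.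
Qed.

Lemma on_all_maxpaths_avoid B x n :
  on_all_maxpaths E x n -> B n -> ~ avoiding_maxpath B x.
Proof.
move=> /on_all_maxpathsP hn Bn hB; apply/hn/(avoiding_maxpath_sub _ hB).
by move=> z <-.
Qed.

Lemma avoiding_maxpath_head B x : avoiding_maxpath B x -> ~ B x.
Proof. by case=> [[s [_ /(_ x (mem_head _ _))]]|[f [[<- _] /(_ 0)]]]. Qed.

Definition prepend x q f i : V :=
  if i < size q then nth x (x :: q) i else f (i - size q).

Lemma prepend_small x q f i :
  f 0 = last x q -> i <= size q -> prepend x q f i = nth x (x :: q) i.
Proof.
rewrite /prepend leq_eqVlt => f0 /predU1P [->|->] //.
by rewrite ltnn subnn f0 (last_nth x).
Qed.

Lemma inf_path_prepend x q f :
  path E x q -> inf_path E (last x q) f -> inf_path E x (prepend x q f).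
Proof.
move=> hq [f0 hf]; split=> [|i]; first by rewrite prepend_small.
case: (ltnP i (size q)) => iq; last first.
  by rewrite /prepend ltnNge iq ltnNge (leqW iq) /= subSn.
rewrite (prepend_small f0 (ltnW iq)) (prepend_small f0 iq) /=.
by move/(pathP x): hq; apply.
Qed.

Lemma avoiding_maxpath_prepend B x q : path E x q ->
  (forall z, z \in x :: q -> ~ B z) -> avoiding_maxpath B (last x q) ->
  avoiding_maxpath B x.
Proof.
move=> hq hB [[s [[hs hl] hsB]]|[f [hf hfB]]]; [left; exists (q ++ s)|right].
- split; first by split; rewrite ?cat_path ?last_cat ?hq.
  move=> z; rewrite -cat_cons mem_cat => /orP [/hB //|zs].
  by apply: hsB; rewrite inE zs orbT.
- exists (prepend x q f); split; first exact: inf_path_prepend.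
  move=> i; rewrite /prepend; case: ltnP => // iq.
  by apply: hB; rewrite mem_nth // ltnS ltnW.
Qed.

Lemma avoiding_maxpath_cycle B x c : path E x c -> last x c = x -> c != [::] ->
  (forall z, z \in c -> ~ B z) -> avoiding_maxpath B x.
Proof.
move=> hc hl c0 hB; right.
have n0 : 0 < size c by rewrite lt0n size_eq0.
have xc : x \in c by case: c hl c0 {hc hB n0} => //= y c <- _; exact: mem_last.
exists (fun i => nth x (x :: c) (i %% size c)); split; first split.
- by rewrite mod0n.
- move=> i; rewrite -addn1 -modnDml addn1; set j := i %% size c.
  have jc : j < size c by rewrite ltn_mod.
  have -> : nth x (x :: c) (j.+1 %% size c) = nth x c j.
    case: (ltngtP j.+1 (size c)) => [jn|jn|jn]; first by rewrite modn_small.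
      by rewrite ltnNge jc in jn.
    by rewrite jn modnn /= -[in LHS]hl (last_nth x) -jn.
  by move/(pathP x): hc; apply.
- move=> i; apply: hB; move: (ltn_mod i (size c)); rewrite n0.
  by case: (i %% size c) => [|j jc] //=; apply/mem_nth/ltnW.
Qed.

Lemma path_map_iota f n : (forall k, k < n -> E (f k) (f k.+1)) ->
  path E (f 0) (map f (iota 1 n)) /\ last (f 0) (map f (iota 1 n)) = f n.
Proof.
elim: n => [//|n IH] hf.
have [hp hl] := IH (fun k kn => hf k (leqW kn)).
by rewrite -[n.+1]addn1 iotaD map_cat cat_path last_cat hl /= hp add1n addn1 hf.
Qed.

Lemma maxpath_exists x : (exists s, fin_maxpath E x s) \/ (exists f, inf_path E x f).
Proof.
pose f i := iter i (fun y => odflt y [pick z | E y z]) x.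
have fE i : [exists z, E (f i) z] -> E (f i) (f i.+1).
  by case/existsP=> z hz; rewrite /= /f /=; case: pickP => [//|/(_ z)]; rewrite hz.
case: (classic (exists i, ~~ [exists z, E (f i) z])) => [hend|hinf]; [left|right].
- case: (ex_minnP hend) => m /existsPn mend mmin.
  have [hp hl] : path E (f 0) (map f (iota 1 m)) /\ last (f 0) (map f (iota 1 m)) = f m.
    by apply: path_map_iota => k km; apply/fE/contraT => /mmin; rewrite leqNgt km.
  by exists (map f (iota 1 m)); split=> // y; rewrite hl.
- exists f; split=> // i; apply/fE/contraT => hi.
  by case: hinf; exists i.
Qed.

Lemma on_all_maxpaths_path x n :
  on_all_maxpaths E x n -> exists2 q, path E x q & last x q = n.
Proof.
case=> hfin hinf; case: (maxpath_exists x) => [[s hs]|[f hf]].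
- move: (hfin s hs) (hs) => /splitPl [s1 s2 <-] [+ _].
  by rewrite cat_path => /andP [hp _]; exists s1.
- have [i fi] := hinf f hf.
  have [hp hl] := path_map_iota (n := i) (fun k _ => hf.2 k).
  by exists (map f (iota 1 i)); rewrite -hf.1 // hl.
Qed.

Lemma on_all_maxpaths_succ x y n :
  on_all_maxpaths E x n -> x <> n -> E x y -> on_all_maxpaths E y n.
Proof.
rewrite !on_all_maxpathsP => hx xn xy hy; apply/hx/(avoiding_maxpath_prepend (q := [:: y])).
- by rewrite /= xy.
- move=> z; rewrite !inE => /orP [] /eqP -> nz; first exact: xn (esym nz).
  exact: avoiding_maxpath_head hy nz.
- exact: hy.
Qed.

Lemma avoiding_maxpath_hit B (Q : V -> Prop) x : avoiding_maxpath B x ->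
  avoiding_maxpath (fun z => B z \/ Q z) x \/ exists2 z, Q z & avoiding_maxpath B z.
Proof.
case=> [[s [hs hB]]|[f [hf hB]]].
- case: (classic (exists2 z, z \in x :: s & Q z)) => [[z zs Qz]|hQ].
    right; exists z => //; left; case/splitPl: zs hs hB => s1 s2 <- [].
    rewrite cat_path last_cat => /andP [_ hs2] hl hB.
    exists s2; split=> // y; rewrite inE => /predU1P [->|ys2]; apply: hB.
      by rewrite -cat_cons mem_cat mem_last.
    by rewrite inE mem_cat ys2 !orbT.
  by left; left; exists s; split=> // z zs [/(hB z zs)|Qz] //; apply: hQ; exists z.
- case: (classic (exists i, Q (f i))) => [[i Qi]|hQ].
    right; exists (f i) => //; right; exists (fun k => f (i + k)).
    by split; [split; [rewrite addn0 | move=> k; rewrite addnS; exact: hf.2] | move=> k].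
  by left; right; exists f; split=> // i [/hB|Qi] //; apply: hQ; exists i.
Qed.

Lemma on_all_maxpaths_cycle x n c : on_all_maxpaths E x n ->
  path E x c -> last x c = x -> c != [::] -> n \in c.
Proof.
move=> /on_all_maxpathsP hn hc hl c0; apply: contraT => nc.
exfalso; apply: hn; apply: (avoiding_maxpath_cycle hc hl c0) => z zc nz.
by rewrite nz zc in nc.
Qed.

Lemma all_before_path s a b q :
  all_before E s a b -> path E s q -> last s q = b -> a \in s :: q.
Proof.
move=> [hfin hinf] hq hl; apply: contraT => aq; exfalso.
case: (maxpath_exists b) => [[r [hr hrl]]|[f [f0 hf]]].
- have [|i [si [ia hib]]] := hfin (q ++ r).
    by split; rewrite ?cat_path ?last_cat hl ?hq.
  case: (leqP i (size q)) => iq.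
    by move: aq; rewrite -ia -cat_cons nth_cat /= ltnS iq mem_nth.
  by apply: (hib (size q) (ltnW iq)); rewrite -cat_cons nth_cat /= ltnSn -(last_nth s) hl.
- have f0' : f 0 = last s q by rewrite f0 hl.
  have [i [gi hib]] := hinf _ (inf_path_prepend hq (conj f0' hf)).
  case: (leqP i (size q)) => iq.
    by move: aq; rewrite -gi prepend_small // mem_nth.
  by apply: (hib (size q) (ltnW iq)); rewrite prepend_small // -(last_nth s) hl.
Qed.

Lemma all_before_intro s a b : on_all_maxpaths E s b -> a <> b ->
  (forall q, path E s q -> last s q = b -> a \in s :: q) -> all_before E s a b.
Proof.
move=> [hfin hinf] ab hpath; split=> [t ht|f hf].
- have bt := hfin t ht; set i := index b (s :: t).
  have it : i <= size t by rewrite -ltnS index_mem.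
  have : a \in take i.+1 (s :: t).
    by apply: hpath (take_path i ht.1) _; rewrite (last_take_nth s) // nth_index.
  move=> /[dup] /index_ltn; rewrite ltnS leq_eqVlt => /predU1P [ai|ai] /mem_take at_.
    by case: ab; rewrite -(nth_index s at_) ai nth_index.
  exists (index a (s :: t)); rewrite index_mem nth_index //; split=> //; split=> // j ja.
  apply/eqP; have := before_find s (leq_ltn_trans ja ai).
  by rewrite /= => ->.
- have [i fi] := hinf f hf.
  case: (ex_minnP (ex_intro (fun i => f i == b) i (introT eqP fi))) => j /eqP fj jmin.
  have [hp hl] := path_map_iota (n := j) (fun k _ => hf.2 k).
  rewrite hf.1 fj in hp hl.
  have [k kj fk] : exists2 k, k <= j & f k = a.
    case/predU1P: (hpath _ hp hl) => [->|/mapP [k]]; first by exists 0; rewrite ?hf.1.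
    by rewrite mem_iota add1n ltnS => /andP [_ kj] ->; exists k.
  have {}kj : k < j.
    by rewrite ltn_neqAle kj andbT; apply/eqP => ej; apply: ab; rewrite -fk ej fj.
  exists k; split=> // m mk fm.
  by move: (leq_trans (jmin m (introT eqP fm)) mk); rewrite leqNgt kj.
Qed.

End MaxPaths.

Section Languages.
Variable T : eqType.
Implicit Types (P Q : T -> Prop) (t : seq T).

Lemma lcat_intro L1 L2 t1 t2 : L1 t1 -> L2 t2 -> lcat L1 L2 (t1 ++ t2).
Proof. by move=> h1 h2; exists t1, t2. Qed.

Lemma lsym1 P x : P x -> lsym P [:: x].
Proof. by exists x. Qed.

Lemma lstar_symP Q t : lstar (lsym Q) t <-> forall z, z \in t -> Q z.
Proof.
split; first by elim=> // _ t' [x [-> Qx]] _ IH z; rewrite inE => /predU1P [->|/IH].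
elim: t => [|x t IH] hQ; first exact: lstar_nil.
apply: (lstar_cons (w1 := [:: x])); first by apply/lsym1/hQ/mem_head.
by apply: IH => z zt; apply: hQ; rewrite inE zt orbT.
Qed.

Lemma lstar_alt P Q t :
  lcat (lstar (lsym Q)) (lstar (lcat (lsym P) (lstar (lsym Q)))) t <->
  forall z, z \in t -> P z \/ Q z.
Proof.
split.
- case=> t0 [t1 [-> [/lstar_symP h0 h1]]] z; rewrite mem_cat => /orP [/h0|]; first by right.
  elim: h1 => // w1 w2 [u1 [u2 [-> [[x [-> Px]] /lstar_symP hu]]]] _ IH.
  by rewrite /= inE mem_cat => /or3P [/eqP ->|/hu|/IH]; [left|right|].
- elim: t => [|x t IH] hPQ.
    by exists [::], [::]; split=> //; split; apply: lstar_nil.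
  have [t0 [t1 [-> [h0 h1]]]] := IH (fun z zt => hPQ z (mem_behead (s := x :: t) zt)).
  case: (hPQ x (mem_head x _)) => hx.
  + exists [::], (x :: t0 ++ t1); split=> //; split; first exact: lstar_nil.
    apply: (lstar_cons (w1 := x :: t0)) => //.
    exact: (lcat_intro (t1 := [:: x])) (lsym1 hx) h0.
  + exists (x :: t0), t1; split=> //; split=> //.
    exact: (lstar_cons (w1 := [:: x])) (lsym1 hx) h0.
Qed.

End Languages.

Section DODlang.
Variables (V : finType) (E : rel V) (p s1 s2 : V).
Hypothesis hdisj : forall n, Vi E p s1 n -> Vi E p s2 n -> False.

Local Notation V1 := (Vi E p s1).
Local Notation V2 := (Vi E p s2).
Local Notation U := (Uset E p s1 s2).

Lemma V2_or_U z : V2 z \/ U z <-> Vp E p z /\ ~ V1 z.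
Proof.
split=> [[z2|[zV [z1 _]]]|[zV z1]] //; first by split=> [|/hdisj]; [exact: z2.1 | apply].
by case: (classic (V2 z)); [left | right].
Qed.

Lemma V1_or_U z : V1 z \/ U z <-> Vp E p z /\ ~ V2 z.
Proof.
split=> [[z1|[zV [_ z2]]]|[zV z2]] //; first by split=> [|/(hdisj z1)]; [exact: z1.1 | apply].
by case: (classic (V1 z)); [left | right].
Qed.

Lemma DODlangP w : DODlang E p s1 s2 w <-> exists c0 X l2 Y,
  [/\ w = c0 :: X ++ l2 :: Y, V1 c0, V2 l2,
      forall z, z \in X -> Vp E p z /\ ~ V1 z & forall z, z \in Y -> Vp E p z /\ ~ V2 z].
Proof.
split.
- case=> w1 [w2 [-> [[c0 [-> V1c0]] [a1 [a2 [-> [ha1 [b1 [b2 [-> [hb1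
    [d1 [d2 [-> [[l2 [-> V2l2]] [e1 [e2 [-> [he1 he2]]]]]]]]]]]]]]]]]]].
  exists c0, (a1 ++ b1), l2, (e1 ++ e2); split=> //; first by rewrite /= -!catA.
  + by move=> z /((lstar_alt V2 U _).1 (lcat_intro ha1 hb1)) /V2_or_U.
  + by move=> z /((lstar_alt V1 U _).1 (lcat_intro he1 he2)) /V1_or_U.
- case=> c0 [X [l2 [Y [-> V1c0 V2l2 hX hY]]]].
  have [a1 [b1 [-> [ha1 hb1]]]] := (lstar_alt V2 U X).2 (fun z zX => (V2_or_U z).2 (hX z zX)).
  have [e1 [e2 [-> [he1 he2]]]] := (lstar_alt V1 U Y).2 (fun z zY => (V1_or_U z).2 (hY z zY)).
  rewrite -cat1s -catA -(cat1s l2).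
  by do !apply: lcat_intro => //; apply: lsym1.
Qed.

End DODlang.

Section Ap.
Variables (V : finType) (E : rel V) (p : V).

Lemma Aedge_pp_neq_p y y' : Aedge E p p y -> Aedge E p p y' -> y <> y' -> y <> p.
Proof.
move=> [_ [_ [_ [_ [m [hm hmV]]]]]] [_ [y'V _]] yy' yp; subst y.
have := on_all_maxpaths_cycle y'V hm (last_rcons _ _ _).
rewrite -size_eq0 size_rcons mem_rcons inE => /(_ isT) /predU1P [|/hmV] //.
exact: nesym.
Qed.

Lemma on_all_maxpaths_Aedge_p y n :
  Aedge E p p y -> Cnode E p n -> on_all_maxpaths E y n.
Proof.
move=> [_ [_ [_ [_ [m [hm hmV]]]]]] [nV np]; apply/on_all_maxpathsP => hy.
apply: (on_all_maxpaths_avoid nV (erefl n)).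
apply: (avoiding_maxpath_prepend hm); last by rewrite last_rcons.
move=> z; rewrite -rcons_cons mem_rcons !inE => /predU1P [->|/predU1P [->|zm]] nz.
- exact: avoiding_maxpath_head hy nz.
- exact: np nz.
- by apply: (hmV _ zm); rewrite -nz.
Qed.

Lemma Vi_first_entry s q n : path E s q -> last s q = n -> Vp E p n ->
  exists q1 q2, q = q1 ++ q2 /\ Vi E p s (last s q1).
Proof.
move=> + <-; have Vi_self x : Vp E p x -> Vi E p x x by split=> //; exists [::].
elim: q s => [|x q IH] s /=; first by move=> _ /Vi_self; exists [::], [::].
case/andP=> sx hq /(IH x hq) [q1 [q2 [-> [eV [m [hm [hl hmV]]]]]]].
case: (classic (Vp E p s)) => [/Vi_self|sV]; first by exists [::], (x :: q1 ++ q2).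
exists (x :: q1), q2; split=> //; split=> //; exists (x :: m).
by split; [rewrite /= sx | split=> // z; rewrite inE => /predU1P [->|/hmV]].
Qed.

Lemma Aedge_Vi x s e : Vp E p x -> E x s -> Vi E p s e -> Aedge E p x e.
Proof.
move=> xV xs [eV [m [hm [hl hmV]]]]; do 4!split=> //.
by exists (belast s m); split=> //; rewrite -hl -lastI /= xs.
Qed.

Lemma chain_expand x r : chainP (Aedge E p) x r -> exists q,
  [/\ path E x q, last x q = last x r, r != [::] -> q != [::]
    & forall z, z \in q -> Vp E p z -> z \in r].
Proof.
elim: r x => [|y r IH] x /=; first by exists [::].
case=> [[_ [_ [_ [_ [m [hm hmV]]]]]]] /IH [q [hq hl _ hqr]].
exists (rcons m y ++ q); split.
- by rewrite cat_path hm last_rcons.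
- by rewrite last_cat last_rcons.
- by rewrite -size_eq0 size_cat size_rcons.
- move=> z; rewrite mem_cat mem_rcons inE -orbA => /or3P [/eqP ->|/hmV //|/hqr zr] zV.
    exact: mem_head.
  by rewrite inE zr // orbT.
Qed.

Lemma chain_path_avoiding x r e a : chainP (Aedge E p) x r -> e \in r ->
  a \notin r -> Vp E p a -> exists c, [/\ path E x c, last x c = e, c != [::] & a \notin c].
Proof.
move=> hr er ar aV; case/splitPr: er hr ar => r1 r2.
rewrite -cat_rcons => /chainP_cat [/chain_expand [c [hc cl c0 hcr]] _] ar.
exists c; split=> //.
- by rewrite cl last_rcons.
- by apply: c0; rewrite -size_eq0 size_rcons.
- apply/negP=> /hcr /(_ aV); rewrite mem_rcons => ar1.
  by rewrite mem_cat mem_rcons ar1 in ar.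
Qed.

(* A boolean copy of the edge relation of [A_p], so that [path] and [cycle]
   apply. *)
Definition Aedgeb x y := classicb (Aedge E p x y).

Lemma chainP_path x r : chainP (Aedge E p) x r <-> path Aedgeb x r.
Proof.
elim: r x => [|y r IH] x //=; split.
- by case=> xy /IH ->; rewrite andbT; apply/classicbP.
- by case/andP=> /classicbP xy /IH.
Qed.

Lemma all_before_Apath s a b e l : all_before E s a b -> Vi E p s e ->
  path Aedgeb e l -> last e l = b -> Vp E p a -> a \in e :: l.
Proof.
move=> hab [_ [m [hm [me hmV]]]] /chainP_path /chain_expand [q [hq ql _ hqr]] lb aV.
have : a \in s :: m ++ q.
  apply: (all_before_path hab); first by rewrite cat_path hm me hq.
  by rewrite last_cat me ql.
rewrite -cat_cons lastI me cat_rcons mem_cat inE.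
case/or3P=> [/hmV /(_ aV) []|/eqP ->|/hqr /(_ aV) al]; first exact: mem_head.
by rewrite inE al orbT.
Qed.

Definition hamiltonian c :=
  [/\ cycle Aedgeb c, uniq c & forall z, z \in c <-> Cnode E p z].

Lemma hamiltonian_rot i c : hamiltonian c -> hamiltonian (rot i c).
Proof. by case=> hc hu hm; split; rewrite ?rot_cycle ?rot_uniq // => z; rewrite mem_rot. Qed.

Lemma unfolding_of_hamiltonian x r : hamiltonian (x :: r) -> unfolding E p (x :: r).
Proof.
case=> hc hu hm; split; last by split=> //; split=> z /hm.
exists x, r; split=> //; apply/chainP_path.
by move: hc; rewrite /= rcons_path => /andP [].
Qed.

Section TwoSuccessors.
Variables (y1 y2 : V).
Hypotheses (y12 : y1 <> y2) (py1 : Aedge E p p y1) (py2 : Aedge E p p y2).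

Lemma Aedge_p_other g : exists2 g', Aedge E p p g' & g' <> g.
Proof. by case: (classic (y1 = g)) => [<-|]; [exists y2 => // /esym | exists y1]. Qed.

Lemma Cnode_Aedge_p g : Aedge E p p g -> Cnode E p g.
Proof.
move=> pg; split; first exact: pg.2.1.
by have [g' pg' g'g] := Aedge_p_other g; apply: Aedge_pp_neq_p pg pg' (nesym g'g).
Qed.

(* A maximal path from [x] avoiding [n] also avoids all successors of [p] in
   [A_p], as they reach [n] on all maximal paths. Prefixed with the part of a
   path from [y1] to [x] after its last such successor [g], it would avoid
   another successor [g'], which [g] reaches on all maximal paths. *)
Lemma Cnode_on_all x n : Cnode E p x -> Cnode E p n -> on_all_maxpaths E x n.
Proof.
move=> xC nC; apply/on_all_maxpathsP => hx.
case: (avoiding_maxpath_hit (Aedge E p p) hx) => [hx'|[g pg]]; last first.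
  exact: on_all_maxpaths_avoid (on_all_maxpaths_Aedge_p pg nC) (erefl n).
have [t ht tx] := on_all_maxpaths_path (on_all_maxpaths_Aedge_p py1 xC).
have [t1 [g [t2 [et pg t2p]]]] :=
  last_occurrence (ex_intro2 _ _ y1 (mem_head y1 t) py1).
have [ht2 t2x] := path_suffix ht et; rewrite tx in t2x.
have [g' pg' g'g] := Aedge_p_other g.
apply: (on_all_maxpaths_avoid (on_all_maxpaths_Aedge_p pg (Cnode_Aedge_p pg')) (erefl g')).
apply: (avoiding_maxpath_prepend ht2).
- move=> z; rewrite inE => /predU1P [->|zt2] g'z; first exact: g'g.
  by apply: (t2p _ zt2); rewrite -g'z.
- by rewrite t2x; apply: avoiding_maxpath_sub hx' => z <-; right.
Qed.

(* The cycle meets [y1]; from its last successor [g] of [p], going round back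
   to [g] through [p] avoids another successor [g'] of [p]. *)
Lemma no_cycle_through_p c : path E p c -> last p c = p -> c != [::] -> False.
Proof.
move=> hc hl c0.
have [c1 [g [c2 [ec pg c2p]]]] :=
  last_occurrence (ex_intro2 _ _ y1 (on_all_maxpaths_cycle py1.2.1 hc hl c0) py1).
have [hc2 c2p'] : path E g c2 /\ last g c2 = p.
  by rewrite -hl; apply: (path_suffix (s1 := p :: c1) hc); rewrite ec.
have [g' pg' g'g] := Aedge_p_other g.
have [_ [_ [_ [_ [m [hm hmV]]]]]] := pg.
have : g' \in c2 ++ rcons m g.
  apply: (on_all_maxpaths_cycle (on_all_maxpaths_Aedge_p pg (Cnode_Aedge_p pg'))).
  - by rewrite cat_path hc2 c2p' hm.
  - by rewrite last_cat c2p' last_rcons.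
  - by rewrite -size_eq0 size_cat size_rcons addnS.
by rewrite mem_cat mem_rcons inE => /or3P [/c2p /(_ pg')|/eqP /g'g|/hmV /(_ pg'.2.1)].
Qed.

Lemma Vi_neq_p s : E p s -> ~ Vi E p s p.
Proof.
move=> ps [_ [m [hm [hl _]]]].
by apply: (no_cycle_through_p (c := s :: m)) => //=; rewrite ps.
Qed.

Lemma Vi_Cnode s e : E p s -> Vi E p s e -> Cnode E p e.
Proof.
move=> ps ve; split=> [|ep]; first exact: ve.1.
by apply: (Vi_neq_p ps); move: ve; rewrite ep.
Qed.

Lemma Vi_exists s : E p s -> exists e, Vi E p s e.
Proof.
move=> ps; have y1C := Cnode_Aedge_p py1.
have [q hq qy] := on_all_maxpaths_path (on_all_maxpaths_succ y1C.1 (nesym y1C.2) ps).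
have [q1 [_ [_ ve]]] := Vi_first_entry hq qy y1C.1.
by exists (last s q1).
Qed.

Lemma no_Aedge_to_p x : Cnode E p x -> ~ Aedge E p x p.
Proof.
move=> [xV _] [_ [_ [_ [_ [m [hm _]]]]]].
have [t ht tx] := on_all_maxpaths_path xV.
apply: (no_cycle_through_p (c := t ++ rcons m p)).
- by rewrite cat_path ht tx hm.
- by rewrite last_cat last_rcons.
- by rewrite -size_eq0 size_cat size_rcons addnS.
Qed.

Lemma Cnode_Aedge_succ z : Cnode E p z -> exists y, Aedge E p z y /\ Cnode E p y.
Proof.
move=> zC; have [n pn nz] := Aedge_p_other z.
have [[|v q] /= hq hl] := on_all_maxpaths_path (Cnode_on_all zC (Cnode_Aedge_p pn)).
  by case: nz.
case/andP: hq => zv hq.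
have [q1 [_ [_ ve]]] := Vi_first_entry hq hl pn.2.1.
have ze := Aedge_Vi zC.1 zv ve.
exists (last v q1); split=> //; split; first exact: ve.1.
by move=> ep; move: ze; rewrite ep; apply: no_Aedge_to_p.
Qed.

Lemma Acycle_covers_C c : c != [::] -> cycle Aedgeb c ->
  (forall z, z \in c -> Cnode E p z) -> forall n, Cnode E p n -> n \in c.
Proof.
case: c => [//|x r] _ /= /chainP_path /chain_expand [q [hq hl q0 hqr]] hC n nC.
have q0' : q != [::] by apply: q0; rewrite -size_eq0 size_rcons.
rewrite last_rcons in hl.
have := on_all_maxpaths_cycle (Cnode_on_all (hC x (mem_head x r)) nC) hq hl q0'.
by move=> /hqr /(_ nC.1); rewrite mem_rcons.
Qed.

Lemma hamiltonian_exists : exists c, hamiltonian c.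
Proof.
pose next z := odflt z [pick y | classicb (Aedge E p z y /\ Cnode E p y)].
have nextC z : Cnode E p z -> Aedge E p z (next z) /\ Cnode E p (next z).
  move=> zC; rewrite /next; case: pickP => [y /classicbP //|none].
  by have [y hy] := Cnode_Aedge_succ zC; move: (none y); rewrite (introT (classicbP _) hy).
have iterC i z : Cnode E p z -> Cnode E p (iter i next z).
  by move=> zC; elim: i => [|i IH] //=; exact: (nextC _ IH).2.
have [i cyc] := fcycle_orbit_iter next y1.
set x := iter i next y1 in cyc.
have orbC z : z \in orbit next x -> Cnode E p z.
  by case/trajectP=> j _ ->; apply/iterC/iterC/Cnode_Aedge_p.
have cycA : cycle Aedgeb (orbit next x).
  apply: (sub_in_cycle (P := fun z => classicb (Cnode E p z))) cyc.
  - by move=> u v /classicbP uC _ /eqP <-; apply/classicbP; exact: (nextC u uC).1.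
  - by apply/allP=> z /orbC /classicbP.
have c0 : orbit next x != [::] by apply/eqP=> c0; move: (in_orbit next x); rewrite c0.
exists (orbit next x); split=> // z; split=> [/orbC //|].
exact: Acycle_covers_C c0 cycA orbC z.
Qed.

(* A path from [s] to [b] avoiding [a] enters [V_p] at some [e] in [V_s];
   returning from [b] to [e] and following the path again closes a cycle
   through [b] that avoids [a], although [a] is on all maximal paths from [b]. *)
Lemma all_before_Vi s a b : E p s -> Cnode E p a -> Cnode E p b -> a <> b ->
  (forall e, Vi E p s e -> e <> a ->
     exists c, [/\ path E b c, last b c = e, c != [::] & a \notin c]) ->
  all_before E s a b.
Proof.
move=> ps aC bC ab back; apply: all_before_intro => //.
  exact: on_all_maxpaths_succ bC.1 (nesym bC.2) ps.
move=> q hq qb; apply: contraT => aq; exfalso.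
have [q1 [q2 [qE ve]]] := Vi_first_entry hq qb bC.1.
have ea : last s q1 <> a.
  by move=> ea; rewrite qE -cat_cons mem_cat -ea mem_last in aq.
have [c [hc cl c0 ac]] := back _ ve ea.
move: hq qb; rewrite qE cat_path last_cat => /andP [_ hq2] qb.
have : a \in c ++ q2.
  apply: (on_all_maxpaths_cycle (Cnode_on_all bC aC)).
  - by rewrite cat_path hc cl.
  - by rewrite last_cat cl.
  - by move: c0; rewrite -!size_eq0 size_cat; case: (size c).
by rewrite mem_cat (negPf ac) /= => aq2; rewrite qE inE mem_cat aq2 !orbT in aq.
Qed.

Section DOD.
Variables (s1 s2 : V).
Hypothesis hpred : pred_node E p s1 s2.
Hypothesis hdisj : forall n, Vi E p s1 n -> Vi E p s2 n -> False.

Local Notation V1 := (Vi E p s1).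
Local Notation V2 := (Vi E p s2).

Lemma edge_p_s1 : E p s1. Proof. by case: hpred => _ ->; rewrite eqxx. Qed.

Lemma edge_p_s2 : E p s2. Proof. by case: hpred => _ ->; rewrite eqxx orbT. Qed.

Lemma DOD_intro a b : Cnode E p a -> Cnode E p b -> a <> b ->
  all_before E s1 a b -> all_before E s2 b a -> DOD E p s1 s2 a b.
Proof.
move=> [aV ap] [bV bp] ab h1 h2.
by split; [exact: nesym ap | split; first exact: nesym bp].
Qed.

Lemma DOD_of_unfolding w : unfolding E p w -> DODlang E p s1 s2 w ->
  exists a b, DOD E p s1 s2 a b.
Proof.
move=> [[x [r [-> hch]]] [hu [hC hcov]]] /(DODlangP hdisj).
case=> c0 [X [l2 [Y [[ex er] V1c0 V2l2 hX hY]]]]; subst x r.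
have c0C : Cnode E p c0 := hC c0 (mem_head _ _).
have l2C : Cnode E p l2 by apply: hC; rewrite inE mem_cat inE eqxx !orbT.
have c0l2 : c0 <> l2 by move=> e; apply: (hdisj V1c0); rewrite e.
have c0Y : c0 \notin Y by apply: contraTN hu => c0Y; rewrite /= mem_cat inE c0Y !orbT.
have l2X : l2 \notin X by apply: contraTN hu => l2X; rewrite /= cat_uniq /= l2X !andbF.
case/chainP_cat: hch => hX' /= [_ hY'].
exists c0, l2; apply: DOD_intro => //.
- apply: (all_before_Vi edge_p_s1 c0C l2C c0l2) => e ve ec0.
  move: (hcov e (Vi_Cnode edge_p_s1 ve)).
  rewrite inE mem_cat inE => /or4P [/eqP //|/hX [_ /(_ ve)]|/eqP el2|eY] //.
    by case: (hdisj ve); rewrite el2.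
  exact: chain_path_avoiding hY' eY c0Y c0C.1.
- apply: (all_before_Vi edge_p_s2 l2C c0C (nesym c0l2)) => e ve el2.
  move: (hcov e (Vi_Cnode edge_p_s2 ve)).
  rewrite inE mem_cat inE => /or4P [/eqP ec0|eX|/eqP //|/hY [_ /(_ ve)]] //.
    by case: (hdisj V1c0); rewrite -ec0.
  exact: chain_path_avoiding hX' eX l2X l2C.1.
Qed.

(* Cut the Hamiltonian cycle after [a] and after [b]: a [V2] node on the arc
   ending with [a] would give a path from [s2] to [a] avoiding [b], and
   symmetrically. *)
Lemma DOD_arcs a b : DOD E p s1 s2 a b -> exists L R,
  [/\ hamiltonian (L ++ R), forall z, z \in L -> ~ V2 z & forall z, z \in R -> ~ V1 z].
Proof.
move=> [pa [pb [ab [aV [bV [ab1 ab2]]]]]].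
have [c hc] := hamiltonian_exists; have [_ _ hm] := hc.
have [i [L0 [R0 e]]] := rot_rcons2 ((hm a).2 (conj aV (nesym pa)))
  ((hm b).2 (conj bV (nesym pb))) (introN eqP ab).
have hLR := hamiltonian_rot i hc; rewrite e in hLR.
have [hcyc hu _] := hLR.
have la : last a (rcons L0 a) = a by rewrite last_rcons.
have lb : last b (rcons R0 b) = b by rewrite last_rcons.
exists (rcons L0 a), (rcons R0 b); split=> // z zX zV.
- case/splitPr: zX la hcyc hu => L1 L2; rewrite last_cat /= => la + hu.
  rewrite -catA /= => /cycle_path_suffix; rewrite cat_path => /andP [hL2 _].
  have bR : b \in rcons R0 b by rewrite mem_rcons mem_head.
  by move: (uniq_cat_notin hu bR); rewrite mem_cat (all_before_Apath ab2 zV hL2 la bV) orbT.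
- case/splitPr: zX lb hcyc hu => R1 R2; rewrite last_cat /= => lb.
  rewrite catA => /cycle_path_suffix hR2 hu.
  have aL : a \in rcons L0 a by rewrite mem_rcons mem_head.
  by move: (uniq_cat_notin hu (all_before_Apath ab1 zV hR2 lb aV)); rewrite mem_cat aL.
Qed.

Lemma unfolding_in_DODlang L R : hamiltonian (L ++ R) ->
  (forall z, z \in L -> ~ V2 z) -> (forall z, z \in R -> ~ V1 z) ->
  exists w, unfolding E p w /\ DODlang E p s1 s2 w.
Proof.
move=> hLR L2 R1; have [_ _ hm] := hLR.
have [e1 ve1] := Vi_exists edge_p_s1; have [e2 ve2] := Vi_exists edge_p_s2.
have e1L : e1 \in L.
  move: ((hm e1).2 (Vi_Cnode edge_p_s1 ve1)).
  by rewrite mem_cat => /orP [//|/R1 /(_ ve1)].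
have e2R : e2 \in R.
  move: ((hm e2).2 (Vi_Cnode edge_p_s2 ve2)).
  by rewrite mem_cat => /orP [/L2 /(_ ve2)|].
have [La [g [Lb [eL V1g Lb1]]]] := last_occurrence (ex_intro2 _ _ e1 e1L ve1).
have [Ra [l2 [Rb [eR V2l2 Rb2]]]] := last_occurrence (ex_intro2 _ _ e2 e2R ve2).
have ew : rot (size La) (L ++ R) = g :: (Lb ++ Ra) ++ l2 :: Rb ++ La.
  by rewrite eL eR -[(La ++ _) ++ _]catA rot_size_cat /= -!catA.
have hw := hamiltonian_rot (size La) hLR; rewrite ew in hw; have [_ _ hwm] := hw.
exists (g :: (Lb ++ Ra) ++ l2 :: Rb ++ La); split; first exact: unfolding_of_hamiltonian.
have wV z : z \in g :: (Lb ++ Ra) ++ l2 :: Rb ++ La -> Vp E p z by move/hwm => [].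
apply/(DODlangP hdisj); exists g, (Lb ++ Ra), l2, (Rb ++ La); split=> // z zX; split.
- by apply: wV; rewrite inE mem_cat zX orbT.
- move: zX; rewrite mem_cat => /orP [/Lb1 //|zRa]; apply: R1.
  by rewrite eR mem_cat zRa.
- by apply: wV; rewrite inE mem_cat inE zX !orbT.
- move: zX; rewrite mem_cat => /orP [/Rb2 //|zLa]; apply: L2.
  by rewrite eL mem_cat zLa.
Qed.

End DOD.

End TwoSuccessors.

End Ap.

Theorem theorem4p14 (V : finType) (E : rel V) (p s1 s2 : V)
  (hcfg : is_cfg E)
  (hpred : pred_node E p s1 s2)
  (hAp : exists y1 y2 : V, y1 <> y2 /\ Aedge E p p y1 /\ Aedge E p p y2)
  (hdisj : forall n : V, Vi E p s1 n -> Vi E p s2 n -> False) :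
  (exists a b : V, DOD E p s1 s2 a b) <->
  (exists w : seq V, unfolding E p w /\ DODlang E p s1 s2 w).
Proof.
(* The argument works in any finite graph. *)
have [y1 [y2 [y12 [py1 py2]]]] := hAp.
split=> [[a [b /(DOD_arcs y12 py1 py2) [L [R [hLR L2 R1]]]]]|[w [hw hL]]].
- exact: (unfolding_in_DODlang y12 py1 py2 hpred hdisj hLR L2 R1).
- exact: (DOD_of_unfolding y12 py1 py2 hpred hdisj hw hL).
Qed.
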